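(* Let $A,B>0$, $x\ge1$, let $\lambda$ be a nonnegative multiplicative function in $\mathcal M(x;A,B)$, and let $\vartheta$ be a complex-valued additive function. Put $$\Theta(x):=\sum_{p^\nu\le x}\frac{\lambda(p^\nu)\vartheta(p^\nu)}{p^\nu},\qquad\mathfrak S(x):=\sum_{p^\nu\le x}\frac{\lambda(p^\nu)|\vartheta(p^\nu)|^2}{p^\nu},$$ the sums running over prime powers $p^\nu$ with $\nu\ge1$. Then $$\sum_{n\le x}\frac{\lambda(n)}{n}|\vartheta(n)-\Theta(x)|^2\ll\mathfrak S(x)\sum_{n\le x}\frac{\lambda(n)}{n},$$ with implied constant depending only on $A,B$.
   Context: For $x\ge1$, $A,B>0$, $\mathcal M(x;A,B)$ is the class of complex multiplicative $f$ with $\max_{p\le x}|f(p)|\le A$ and $\sum_{p^\nu\le x,\ \nu\ge2}|f(p^\nu)|\log(p^\nu)/p^\nu\le B$ ($p$ prime). *)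

From Stdlib Require Import Reals ZArith Znumtheory List Arith.
Import ListNotations.
Open Scope R_scope.

(* Complex numbers represented as pairs (real part, imaginary part). *)
Definition Cpx : Type := (R * R)%type.
Definition Cadd (z w : Cpx) : Cpx := (fst z + fst w, snd z + snd w).
Definition Csub (z w : Cpx) : Cpx := (fst z - fst w, snd z - snd w).
Definition Cnorm2 (z : Cpx) : R := fst z * fst z + snd z * snd z.

Definition is_prime (p : nat) : Prop := prime (Z.of_nat p).

(* bound M with every n <= x satisfying n <= M *)
Definition bnd (x : R) : nat := Z.to_nat (up x).

Definition rsum (l : list nat) (f : nat -> R) : R :=
  fold_right Rplus 0 (map f l).

Definition sum_upto (x : R) (f : nat -> R) : R :=
  rsum (seq 1 (bnd x))
    (fun n => if Rle_dec (INR n) x then f n else 0).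

(* sum over prime powers p^nu <= x with nu >= nu0 of g (p^nu)
   (each prime power is counted exactly once, via its unique (p, nu)) *)
Definition pp_sum_from (nu0 : nat) (x : R) (g : nat -> R) : R :=
  rsum (seq 1 (bnd x)) (fun p =>
    rsum (seq 1 (bnd x)) (fun nu =>
      if prime_dec (Z.of_nat p) then
        if le_dec nu0 nu then
          if Rle_dec (INR (p ^ nu)%nat) x then g (p ^ nu)%nat else 0
        else 0
      else 0)).

Definition multiplicative_R (f : nat -> R) : Prop :=
  f 1%nat = 1 /\
  forall m n, (1 <= m)%nat -> (1 <= n)%nat -> Nat.gcd m n = 1%nat ->
    f (m * n)%nat = f m * f n.

Definition additive_C (f : nat -> Cpx) : Prop :=
  forall m n, (1 <= m)%nat -> (1 <= n)%nat -> Nat.gcd m n = 1%nat ->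
    f (m * n)%nat = Cadd (f m) (f n).

Definition in_M (x A B : R) (f : nat -> R) : Prop :=
  (forall p : nat, is_prime p -> INR p <= x -> Rabs (f p) <= A) /\
  pp_sum_from 2 x (fun q => Rabs (f q) * ln (INR q) / INR q) <= B.

Definition Theta (lam : nat -> R) (th : nat -> Cpx) (x : R) : Cpx :=
  (pp_sum_from 1 x (fun q => lam q * fst (th q) / INR q),
   pp_sum_from 1 x (fun q => lam q * snd (th q) / INR q)).

Definition frakS (lam : nat -> R) (th : nat -> Cpx) (x : R) : R :=
  pp_sum_from 1 x (fun q => lam q * Cnorm2 (th q) / INR q).

(* Put [w n = lam n / n], a nonnegative multiplicative function, and treat the real and
   imaginary parts of [th] separately as real additive functions [t].  Every [n <= x] is a
   product of prime powers [<= x], so [sum_(n <= x)] is dominated by the sum over all such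
   products, which for [w] is the Euler product [P = prod_p H_p], [H_p = sum_(p^v <= x) w(p^v)].
   Adjoining one prime at a time gives
     [sum w (t - c)^2 <= P (sum_p V_p + (sum_p m_p - c)^2)],
   with [m_p], [V_p] the local first and (unnormalised) second moments; [sum_p V_p] is the
   [S(x)] of the statement, and as [sum_p (H_p - 1)^2 <= 2A^2 + 2B^2], Cauchy-Schwarz bounds
   [(sum_p m_p - Theta)^2 <<_{A,B} S(x)].  It remains to show [P <<_{A,B} sum_(n <= x) w n]:
   by Rankin's trick the Euler product truncated at [y = x^(1/T)] is at most twice the
   partial sum, and raising the truncation to [x] costs [exp (A sum_(y < p <= x) 1/p + B)],
   bounded via Chebyshev's estimate [sum_(p <= z) ln p / p <= 2 ln z]. *)

From Stdlib Require Import Reals ZArith Znumtheory List Arith Lia Lra.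
Import ListNotations.
Open Scope R_scope.

(** * Finite sums *)

Lemma rsum_nil f : rsum [] f = 0.
Proof. reflexivity. Qed.

Lemma rsum_cons a l f : rsum (a :: l) f = f a + rsum l f.
Proof. reflexivity. Qed.

Lemma rsum_app l1 l2 f : rsum (l1 ++ l2) f = rsum l1 f + rsum l2 f.
Proof. induction l1 as [|a l1 IH]; cbn [app]; rewrite ?rsum_cons, ?IH, ?rsum_nil; ring. Qed.

Lemma rsum_ext_in l f g : (forall a, In a l -> f a = g a) -> rsum l f = rsum l g.
Proof.
  induction l as [|a l IH]; intros H; [reflexivity|].
  rewrite !rsum_cons, (H a), IH; [reflexivity| |now left].
  intros; apply H; now right.
Qed.

Lemma rsum_ext l f g : (forall a, f a = g a) -> rsum l f = rsum l g.
Proof. intros; apply rsum_ext_in; auto. Qed.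

Lemma rsum_le_in l f g : (forall a, In a l -> f a <= g a) -> rsum l f <= rsum l g.
Proof.
  induction l as [|a l IH]; intros H; rewrite ?rsum_nil, ?rsum_cons; [lra|].
  apply Rplus_le_compat; [apply H; now left|apply IH; intros; apply H; now right].
Qed.

Lemma rsum_le l f g : (forall a, f a <= g a) -> rsum l f <= rsum l g.
Proof. intros; apply rsum_le_in; auto. Qed.

Lemma rsum_plus l f g : rsum l (fun a => f a + g a) = rsum l f + rsum l g.
Proof. induction l as [|a l IH]; rewrite ?rsum_nil, ?rsum_cons, ?IH; ring. Qed.

Lemma rsum_minus l f g : rsum l (fun a => f a - g a) = rsum l f - rsum l g.
Proof. induction l as [|a l IH]; rewrite ?rsum_nil, ?rsum_cons, ?IH; ring. Qed.

Lemma rsum_scal l c f : rsum l (fun a => c * f a) = c * rsum l f.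
Proof. induction l as [|a l IH]; rewrite ?rsum_nil, ?rsum_cons, ?IH; ring. Qed.

Lemma rsum_0 l : rsum l (fun _ => 0) = 0.
Proof. induction l as [|a l IH]; rewrite ?rsum_nil, ?rsum_cons, ?IH; ring. Qed.

Lemma rsum_nonneg l f : (forall a, In a l -> 0 <= f a) -> 0 <= rsum l f.
Proof. intros H; rewrite <- (rsum_0 l); apply rsum_le_in; auto. Qed.

Lemma rsum_flat_map l (F : nat -> list nat) f :
  rsum (flat_map F l) f = rsum l (fun a => rsum (F a) f).
Proof. induction l as [|a l IH]; [reflexivity|]; cbn [flat_map]; now rewrite rsum_app, rsum_cons, IH. Qed.

Lemma rsum_map l (g : nat -> nat) f : rsum (map g l) f = rsum l (fun a => f (g a)).
Proof. unfold rsum; now rewrite map_map. Qed.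

Lemma rsum_filter l (P : nat -> bool) f :
  rsum (filter P l) f = rsum l (fun a => if P a then f a else 0).
Proof.
  induction l as [|a l IH]; [reflexivity|]; cbn [filter]; rewrite rsum_cons.
  destruct (P a); rewrite ?rsum_cons, IH; ring.
Qed.

Lemma rsum_le_incl l1 l2 f : NoDup l1 ->
  (forall a, In a l1 -> 0 <= f a) -> (forall a, In a l2 -> 0 <= f a) ->
  (forall a, In a l1 -> 0 < f a -> In a l2) -> rsum l1 f <= rsum l2 f.
Proof.
  revert l2; induction l1 as [|a l1 IH]; intros l2 Hnd Hf1 Hf2 Hin.
  { rewrite rsum_nil; now apply rsum_nonneg. }
  inversion Hnd as [|? ? Hnotin Hnd1]; subst; rewrite rsum_cons.
  destruct (Rle_lt_dec (f a) 0) as [Hle|Hlt].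
  - assert (f a = 0) by (specialize (Hf1 a (or_introl eq_refl)); lra).
    enough (rsum l1 f <= rsum l2 f) by lra.
    apply IH; auto; intros; [apply Hf1|apply Hin]; simpl; auto.
  - destruct (in_split a l2) as [u [v ->]]; [apply Hin; simpl; auto|].
    rewrite rsum_app, rsum_cons.
    enough (rsum l1 f <= rsum (u ++ v) f) by (rewrite rsum_app in *; lra).
    apply IH; auto.
    + intros; apply Hf1; now right.
    + intros b Hb; apply Hf2; apply in_app_or in Hb; apply in_or_app; simpl; tauto.
    + intros b Hb Hfb. assert (Hb2 : In b (u ++ a :: v)) by (apply Hin; simpl; auto).
      apply in_app_or in Hb2; apply in_or_app.
      destruct Hb2 as [|[<-|]]; tauto.
Qed.

Lemma rsum_sqr_le l f : (forall a, In a l -> 0 <= f a) ->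
  rsum l (fun a => f a * f a) <= rsum l f * rsum l f.
Proof.
  induction l as [|a l IH]; intros H; rewrite ?rsum_nil, ?rsum_cons; [lra|].
  assert (0 <= f a) by (apply H; now left).
  assert (0 <= rsum l f) by (apply rsum_nonneg; intros; apply H; now right).
  assert (rsum l (fun a => f a * f a) <= rsum l f * rsum l f) by (apply IH; intros; apply H; now right).
  nra.
Qed.

Lemma cauchy_schwarz_step X U V a b r : 0 <= r -> 0 <= U -> 0 <= V -> X * X <= U * V ->
  (X + r * a * b) * (X + r * a * b) <= (U + r * a * a) * (V + r * b * b).
Proof.
  intros Hr HU HV H.
  assert (Hcross : 2 * X * a * b <= a * a * V + b * b * U).
  { assert (0 <= a * a) by nra. assert (0 <= b * b) by nra.
    assert (Hsq : (2 * X * a * b) * (2 * X * a * b) <= (a * a * V + b * b * U) * (a * a * V + b * b * U)).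
    { assert (4 * (a * a) * (b * b) * (X * X) <= 4 * (a * a) * (b * b) * (U * V))
        by (apply Rmult_le_compat_l; [nra|auto]).
      assert (0 <= (a * a * V - b * b * U) * (a * a * V - b * b * U)) by apply Rle_0_sqr.
      nra. }
    assert (0 <= a * a * V) by (apply Rmult_le_pos; lra).
    assert (0 <= b * b * U) by (apply Rmult_le_pos; lra).
    destruct (Rle_lt_dec (2 * X * a * b) 0); nra. }
  assert (0 <= r * (a * a)) by nra. assert (0 <= r * (b * b)) by nra.
  nra.
Qed.

Lemma rsum_cauchy_schwarz l r a b : (forall i, 0 <= r i) ->
  rsum l (fun i => r i * a i * b i) * rsum l (fun i => r i * a i * b i)
  <= rsum l (fun i => r i * a i * a i) * rsum l (fun i => r i * b i * b i).
Proof.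
  intros Hr; induction l as [|i l IH]; rewrite ?rsum_nil, ?rsum_cons; [lra|].
  rewrite !(Rplus_comm (r i * _ * _)).
  apply cauchy_schwarz_step; auto; apply rsum_nonneg; intros j _; specialize (Hr j); nra.
Qed.

(** * Primes and p-adic decomposition *)

Lemma is_prime_ge2 p : is_prime p -> (2 <= p)%nat.
Proof. intros H; apply prime_ge_2 in H; lia. Qed.

Lemma pow_ge1 p v : (1 <= p)%nat -> (1 <= p ^ v)%nat.
Proof. intros; assert (p ^ v <> 0)%nat by (apply Nat.pow_nonzero; lia); lia. Qed.

Lemma pow_ge4 p v : (2 <= p)%nat -> (2 <= v)%nat -> (4 <= p ^ v)%nat.
Proof.
  intros; replace v with (2 + (v - 2))%nat by lia; rewrite Nat.pow_add_r.
  assert (1 <= p ^ (v - 2))%nat by (apply pow_ge1; lia); simpl; nia.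
Qed.

Lemma divide_Nat2Z a b : Nat.divide a b -> (Z.of_nat a | Z.of_nat b)%Z.
Proof. intros [k ->]; exists (Z.of_nat k); now rewrite Nat2Z.inj_mul. Qed.

Lemma divide_Z2Nat a b : (Z.of_nat a | Z.of_nat b)%Z -> Nat.divide a b.
Proof.
  intros [k Hk]; destruct a as [|a].
  - assert (b = 0%nat) by lia; subst; now exists 0%nat.
  - assert (0 <= k)%Z by nia; exists (Z.to_nat k).
    apply Nat2Z.inj; rewrite Nat2Z.inj_mul, Z2Nat.id; lia.
Qed.

Lemma prime_divide_mul p a b : is_prime p -> Nat.divide p (a * b) ->
  Nat.divide p a \/ Nat.divide p b.
Proof.
  intros Hp H; apply divide_Nat2Z in H; rewrite Nat2Z.inj_mul in H.
  destruct (prime_mult _ Hp _ _ H); [left|right]; now apply divide_Z2Nat.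
Qed.

Lemma prime_divide_prime q p : is_prime q -> is_prime p -> Nat.divide q p -> q = p.
Proof.
  intros Hq Hp H; apply divide_Nat2Z in H; pose proof (is_prime_ge2 _ Hq).
  destruct (prime_divisors _ Hp _ H) as [E|[E|[E|E]]]; lia.
Qed.

Lemma prime_divide_pow q p v : is_prime q -> is_prime p -> Nat.divide q (p ^ v) -> q = p.
Proof.
  intros Hq Hp; induction v as [|v IH]; simpl; intros H.
  - apply Nat.divide_1_r in H; pose proof (is_prime_ge2 _ Hq); lia.
  - destruct (prime_divide_mul _ _ _ Hq H); auto; now apply prime_divide_prime.
Qed.

Lemma exists_prime_divisor n : (2 <= n)%nat -> exists q, is_prime q /\ Nat.divide q n.
Proof.
  induction n as [n IH] using lt_wf_ind; intros Hn.
  destruct (prime_dec (Z.of_nat n)) as [Hp|Hp].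
  - exists n; split; [auto|apply Nat.divide_refl].
  - destruct (not_prime_divide (Z.of_nat n)) as [m [Hm Hd]]; [lia|auto|].
    rewrite <- (Z2Nat.id m) in Hd by lia; apply divide_Z2Nat in Hd.
    destruct (IH (Z.to_nat m)) as [q [Hq Hqd]]; try lia.
    exists q; split; [auto|eapply Nat.divide_trans; eauto].
Qed.

Lemma gcd_prime_pow p v N : is_prime p -> ~ Nat.divide p N -> (1 <= N)%nat ->
  Nat.gcd (p ^ v) N = 1%nat.
Proof.
  intros Hp HN HN1; set (g := Nat.gcd (p ^ v) N).
  assert (g <> 0%nat) by (intros E; apply Nat.gcd_eq_0 in E; lia).
  destruct (Nat.eq_dec g 1) as [|Hne]; [auto|exfalso].
  destruct (exists_prime_divisor g) as [q [Hq Hqg]]; [lia|].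
  assert (q = p) as ->.
  { apply (prime_divide_pow q p v); auto.
    eapply Nat.divide_trans; [eauto|apply Nat.gcd_divide_l]. }
  apply HN; eapply Nat.divide_trans; [eauto|apply Nat.gcd_divide_r].
Qed.

Lemma padic_decomp p n : is_prime p -> (1 <= n)%nat ->
  exists v m, n = (p ^ v * m)%nat /\ ~ Nat.divide p m.
Proof.
  intros Hp; pose proof (is_prime_ge2 _ Hp).
  induction n as [n IH] using lt_wf_ind; intros Hn.
  destruct (Nat.eq_dec (n mod p) 0) as [E|E].
  - apply Nat.Lcm0.mod_divide in E as [k Hk].
    destruct (IH k) as [v [m [H1 H2]]]; try nia.
    exists (S v), m; split; [simpl; nia|auto].
  - exists 0%nat, n; split; [simpl; lia|].
    intros D; apply Nat.Lcm0.mod_divide in D; lia.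
Qed.

Lemma padic_decomp_unique p a b N M : is_prime p -> ~ Nat.divide p N -> ~ Nat.divide p M ->
  (p ^ a * N = p ^ b * M)%nat -> a = b /\ N = M.
Proof.
  intros Hp HN HM E; pose proof (is_prime_ge2 _ Hp).
  assert (Hcancel : forall a b N M, (a < b)%nat -> ~ Nat.divide p N ->
            (p ^ a * N = p ^ b * M)%nat -> False).
  { clear a b N M HN HM E; intros a b N M Hlt HN E.
    replace b with (a + S (b - a - 1))%nat in E by lia; rewrite Nat.pow_add_r in E.
    apply HN; exists (p ^ (b - a - 1) * M)%nat.
    apply (Nat.mul_cancel_l _ _ (p ^ a)); [apply Nat.pow_nonzero; lia|].
    rewrite E; simpl; ring. }
  assert (a = b) as <-.
  { destruct (lt_eq_lt_dec a b) as [[Hlt|]|Hlt]; auto; exfalso; eauto. }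
  split; [auto|]; apply (Nat.mul_cancel_l _ _ (p ^ a)); [apply Nat.pow_nonzero; lia|auto].
Qed.

(** * Euler products and the variance bound *)

Lemma NoDup_flat_map {A B : Type} (l : list A) (F : A -> list B) : NoDup l ->
  (forall a, In a l -> NoDup (F a)) ->
  (forall a b y, In a l -> In b l -> In y (F a) -> In y (F b) -> a = b) ->
  NoDup (flat_map F l).
Proof.
  induction l as [|a l IH]; intros Hnd HF Hdisj; simpl; [constructor|].
  inversion Hnd; subst; apply NoDup_app.
  - apply HF; now left.
  - apply IH; auto; intros; [apply HF|eapply Hdisj]; eauto; now right.
  - intros y Hy Hy2; apply in_flat_map in Hy2 as [b [Hb Hyb]].
    assert (a = b) as <- by (eapply Hdisj; eauto; simpl; auto); contradiction.
Qed.

Definition pp_exponents (z : R) (K p : nat) : list nat :=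
  filter (fun v => if Rle_dec (INR (p ^ v)) z then true else false) (seq 0 (S K)).

Fixpoint pp_products (z : R) (K : nat) (L : list nat) : list nat :=
  match L with
  | [] => [1%nat]
  | p :: L' => if prime_dec (Z.of_nat p) then
       flat_map (fun v => map (fun N => (p ^ v * N)%nat) (pp_products z K L'))
         (pp_exponents z K p)
     else pp_products z K L'
  end.

Definition local_factor (z : R) (K : nat) (h : nat -> R) (p : nat) : R :=
  rsum (seq 0 (S K)) (fun v => if Rle_dec (INR (p ^ v)) z then h (p ^ v)%nat else 0).

Definition rprod (f : nat -> R) (L : list nat) : R := fold_right (fun p acc => f p * acc) 1 L.

Definition euler_prod (z : R) (K : nat) (h : nat -> R) (L : list nat) : R :=
  rprod (fun p => if prime_dec (Z.of_nat p) then local_factor z K h p else 1) L.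

Lemma pp_products_spec z K L N : In N (pp_products z K L) ->
  (1 <= N)%nat /\ (forall q, is_prime q -> Nat.divide q N -> In q L).
Proof.
  revert N; induction L as [|p L IH]; intros N H; simpl in H.
  - destruct H as [<-|[]]; split; [auto|].
    intros q Hq D; apply Nat.divide_1_r in D; apply is_prime_ge2 in Hq; lia.
  - destruct (prime_dec (Z.of_nat p)) as [Hp|Hp].
    + apply in_flat_map in H as [v [_ H]]; apply in_map_iff in H as [M [<- HM]].
      destruct (IH _ HM) as [HM1 HMdiv]; split.
      * pose proof (pow_ge1 p v ltac:(apply is_prime_ge2 in Hp; lia)); nia.
      * intros q Hq D; destruct (prime_divide_mul _ _ _ Hq D) as [D'|D'].
        -- left; symmetry; exact (prime_divide_pow q p v Hq Hp D').
        -- right; auto.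
    + destruct (IH _ H) as [H1 H2]; split; [auto|]; intros; right; auto.
Qed.

Lemma rsum_pp_products_cons z K p L F : is_prime p ->
  rsum (pp_products z K (p :: L)) F =
  rsum (seq 0 (S K)) (fun v => if Rle_dec (INR (p ^ v)) z
                               then rsum (pp_products z K L) (fun N => F (p ^ v * N)%nat) else 0).
Proof.
  intros Hp; simpl; destruct (prime_dec (Z.of_nat p)) as [_|]; [|contradiction].
  rewrite rsum_flat_map; unfold pp_exponents; rewrite rsum_filter; apply rsum_ext; intros v.
  destruct (Rle_dec (INR (p ^ v)) z); [apply rsum_map|reflexivity].
Qed.

Lemma pp_products_coprime z K p L N v : is_prime p -> ~ In p L -> In N (pp_products z K L) ->
  Nat.gcd (p ^ v) N = 1%nat /\ (1 <= N)%nat /\ (1 <= p ^ v)%nat.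
Proof.
  intros Hp Hn HN; destruct (pp_products_spec _ _ _ _ HN) as [H1 H2]; split; [|split]; auto.
  - apply gcd_prime_pow; auto.
  - apply pow_ge1; apply is_prime_ge2 in Hp; lia.
Qed.

Lemma rsum_pp_products_mult z K h L : NoDup L -> multiplicative_R h ->
  rsum (pp_products z K L) h = euler_prod z K h L.
Proof.
  intros Hnd [H1 Hm]; induction L as [|p L IH].
  - unfold euler_prod, rprod; simpl; rewrite rsum_cons, rsum_nil, H1; ring.
  - inversion Hnd as [|? ? Hpn Hnd']; subst.
    unfold euler_prod, rprod; cbn [fold_right]; fold (rprod
      (fun p => if prime_dec (Z.of_nat p) then local_factor z K h p else 1) L).
    fold (euler_prod z K h L); rewrite <- IH by auto.
    destruct (prime_dec (Z.of_nat p)) as [Hp|Hp].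
    + rewrite rsum_pp_products_cons by auto; unfold local_factor.
      rewrite Rmult_comm, <- rsum_scal; apply rsum_ext; intros v.
      destruct Rle_dec; [|ring].
      rewrite Rmult_comm, <- rsum_scal; apply rsum_ext_in; intros N HN.
      destruct (pp_products_coprime z K p L N v Hp Hpn HN) as [G [A1 A2]].
      rewrite Hm by auto; ring.
    + simpl; destruct (prime_dec (Z.of_nat p)); [contradiction|ring].
Qed.

Lemma pp_products_NoDup z K L : NoDup L -> NoDup (pp_products z K L).
Proof.
  induction L as [|p L IH]; intros Hnd; simpl; [repeat constructor; auto|].
  inversion Hnd as [|? ? Hpn Hnd']; subst.
  destruct (prime_dec (Z.of_nat p)) as [Hp|Hp]; [|auto].
  pose proof (is_prime_ge2 _ Hp).
  assert (Hcop : forall N, In N (pp_products z K L) -> ~ Nat.divide p N).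
  { intros N HN D; apply Hpn, (pp_products_spec _ _ _ _ HN); auto. }
  apply NoDup_flat_map.
  - apply NoDup_filter, seq_NoDup.
  - intros v _; apply NoDup_map_NoDup_ForallPairs; [|auto].
    intros a b _ _ E; apply (Nat.mul_cancel_l _ _ (p ^ v)); [apply Nat.pow_nonzero; lia|auto].
  - intros a b y _ _ Ha Hb; apply in_map_iff in Ha as [N [<- HN]], Hb as [M [E HM]].
    symmetry; apply (padic_decomp_unique p b a M N); auto.
Qed.

Lemma pp_products_complete z K L n : (1 <= n)%nat -> INR n <= z -> (n <= K)%nat ->
  (forall q, is_prime q -> Nat.divide q n -> In q L) -> In n (pp_products z K L).
Proof.
  revert n; induction L as [|p L IH]; intros n Hn Hz HK Hq; simpl.
  - destruct (Nat.eq_dec n 1) as [|Hn1]; [now left|].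
    destruct (exists_prime_divisor n) as [q [H1 H2]]; [lia|destruct (Hq q H1 H2)].
  - destruct (prime_dec (Z.of_nat p)) as [Hp|Hp].
    2:{ apply IH; auto; intros q Hq1 Hq2; destruct (Hq q Hq1 Hq2) as [<-|]; tauto. }
    pose proof (is_prime_ge2 _ Hp).
    destruct (padic_decomp p n Hp Hn) as [v [m [E Hm]]].
    assert (1 <= m)%nat by (destruct m; lia).
    assert (1 <= p ^ v)%nat by (apply pow_ge1; lia).
    assert (Hpv : (p ^ v <= n)%nat) by nia. assert (Hmn : (m <= n)%nat) by nia.
    apply in_flat_map; exists v; split.
    + unfold pp_exponents; apply filter_In; split.
      * apply in_seq; pose proof (Nat.pow_gt_lin_r p v ltac:(lia)); lia.
      * destruct Rle_dec as [|C]; [auto|exfalso; apply C].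
        apply Rle_trans with (INR n); [apply le_INR|]; auto.
    + apply in_map_iff; exists m; split; [auto|apply IH; try lia].
      * apply Rle_trans with (INR n); [apply le_INR|]; auto.
      * intros q Hq1 Hq2.
        destruct (Hq q Hq1) as [<-|]; [rewrite E; now apply Nat.divide_mul_r|contradiction|auto].
Qed.

Definition additive_R (t : nat -> R) : Prop :=
  forall m n, (1 <= m)%nat -> (1 <= n)%nat -> Nat.gcd m n = 1%nat -> t (m * n)%nat = t m + t n.

Lemma additive_R_1 t : additive_R t -> t 1%nat = 0.
Proof. intros H; specialize (H 1%nat 1%nat (le_n _) (le_n _) eq_refl); simpl in H; lra. Qed.

Lemma local_factor_split z K h p : local_factor z K h p = (if Rle_dec 1 z then h 1%nat else 0) +
  rsum (seq 1 K) (fun v => if Rle_dec (INR (p ^ v)) z then h (p ^ v)%nat else 0).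
Proof. unfold local_factor; simpl seq; now rewrite rsum_cons. Qed.

Lemma local_factor_nonneg z K h p : (1 <= p)%nat -> (forall n, (1 <= n)%nat -> 0 <= h n) ->
  0 <= local_factor z K h p.
Proof.
  intros Hp Hh; apply rsum_nonneg; intros v _; destruct Rle_dec; [apply Hh, pow_ge1; auto|lra].
Qed.

Lemma local_factor_ge1 z K w p : 1 <= z -> multiplicative_R w ->
  (forall n, (1 <= n)%nat -> 0 <= w n) -> (1 <= p)%nat -> 1 <= local_factor z K w p.
Proof.
  intros Hz [H1 _] Hw Hp; rewrite local_factor_split; destruct (Rle_dec 1 z); [|lra].
  enough (0 <= rsum (seq 1 K) (fun v => if Rle_dec (INR (p ^ v)) z then w (p ^ v)%nat else 0)) by lra.
  apply rsum_nonneg; intros v _; destruct Rle_dec; [apply Hw, pow_ge1; auto|lra].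
Qed.

Lemma rprod_ge1 f L : (forall p, In p L -> 1 <= f p) -> 1 <= rprod f L.
Proof.
  induction L as [|a L IH]; intros H; [unfold rprod; simpl; lra|].
  assert (1 <= f a) by (apply H; now left).
  assert (1 <= rprod f L) by (apply IH; intros; apply H; now right).
  change (1 <= f a * rprod f L); nra.
Qed.

Lemma euler_prod_ge1 z K w L : 1 <= z -> multiplicative_R w ->
  (forall n, (1 <= n)%nat -> 0 <= w n) -> 1 <= euler_prod z K w L.
Proof.
  intros; apply rprod_ge1; intros p _; destruct prime_dec as [Hp|]; [|lra].
  apply local_factor_ge1; auto; apply is_prime_ge2 in Hp; lia.
Qed.

(* Adding one prime with local mass [Z >= 1], first moment [T] and second moment [R0]
   to a variance bound [Q + (M - c)^2]. *)
Lemma variance_add_prime Z T R0 Q M c : 1 <= Z -> 0 <= R0 ->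
  (Q + (M - c) * (M - c)) * Z + 2 * (M - c) * T + R0 <=
  Z * (R0 + Q + (T / Z + M - c) * (T / Z + M - c)).
Proof.
  intros HZ HR.
  replace (Z * (R0 + Q + (T / Z + M - c) * (T / Z + M - c))) with
    ((Q + (M - c) * (M - c)) * Z + 2 * (M - c) * T + R0 + ((Z - 1) * R0 + T * T / Z))
    by (field; lra).
  assert (0 <= (Z - 1) * R0) by nra.
  assert (0 <= T * T / Z) by (apply Rmult_le_pos; [apply Rle_0_sqr|left; apply Rinv_0_lt_compat; lra]).
  lra.
Qed.

Section Variance.

Variables (z : R) (K : nat) (w t : nat -> R).
Hypotheses (Hz : 1 <= z) (Hwm : multiplicative_R w) (Hw : forall n, (1 <= n)%nat -> 0 <= w n)
  (Ht : additive_R t).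

Definition local_mean_sum (L : list nat) : R :=
  rsum L (fun p => if prime_dec (Z.of_nat p)
                   then local_factor z K (fun n => w n * t n) p / local_factor z K w p else 0).

Definition local_square_sum (L : list nat) : R :=
  rsum L (fun p => if prime_dec (Z.of_nat p)
                   then local_factor z K (fun n => w n * (t n * t n)) p else 0).

Lemma rsum_pp_products_shift p L v c : is_prime p -> ~ In p L ->
  rsum (pp_products z K L) (fun N => w (p ^ v * N)%nat *
                              ((t (p ^ v * N)%nat - c) * (t (p ^ v * N)%nat - c)))
  = w (p ^ v)%nat * rsum (pp_products z K L)
      (fun N => w N * ((t N - (c - t (p ^ v)%nat)) * (t N - (c - t (p ^ v)%nat)))).
Proof.
  intros Hp Hpn; rewrite <- rsum_scal; apply rsum_ext_in; intros N HN.
  destruct (pp_products_coprime z K p L N v Hp Hpn HN) as [G [A1 A2]].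
  destruct Hwm as [_ Hm]; rewrite Hm, Ht by auto; ring.
Qed.

Lemma pp_products_variance L c : NoDup L ->
  rsum (pp_products z K L) (fun N => w N * ((t N - c) * (t N - c)))
  <= euler_prod z K w L * (local_square_sum L + (local_mean_sum L - c) * (local_mean_sum L - c)).
Proof.
  pose proof (additive_R_1 _ Ht) as Ht1; pose proof Hwm as [Hw1 _].
  intros Hnd; revert c; induction L as [|p L IH]; intros c.
  { unfold euler_prod, rprod, local_square_sum, local_mean_sum; simpl.
    rewrite rsum_cons, !rsum_nil, Hw1, Ht1; lra. }
  inversion Hnd as [|? ? Hpn Hnd']; subst; specialize (IH Hnd').
  unfold euler_prod, local_square_sum, local_mean_sum, rprod in *; cbn [fold_right].
  rewrite !rsum_cons.
  destruct (prime_dec (Z.of_nat p)) as [Hp|Hp].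
  2:{ replace (pp_products z K (p :: L)) with (pp_products z K L)
        by (simpl; destruct prime_dec; [contradiction|reflexivity]).
      rewrite !Rplus_0_l, Rmult_1_l; apply IH. }
  fold (rprod (fun p => if prime_dec (Z.of_nat p) then local_factor z K w p else 1) L) in *.
  set (P := rprod _ L) in *.
  set (Q := rsum L (fun p => if prime_dec _ then local_factor z K (fun n => w n * (t n * t n)) p else 0)) in *.
  set (M := rsum L (fun p => if prime_dec _ then _ / _ else 0)) in *.
  set (Zp := local_factor z K w p); set (T := local_factor z K (fun n => w n * t n) p).
  set (R0 := local_factor z K (fun n => w n * (t n * t n)) p).
  assert (HP : 1 <= P) by (apply (euler_prod_ge1 z K w L); auto).
  assert (Hp2 : (1 <= p)%nat) by (apply is_prime_ge2 in Hp; lia).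
  assert (HZ : 1 <= Zp) by (apply local_factor_ge1; auto).
  assert (HR : 0 <= R0).
  { apply local_factor_nonneg; auto; intros n Hn; apply Rmult_le_pos; [auto|apply Rle_0_sqr]. }
  rewrite rsum_pp_products_cons by auto.
  apply Rle_trans with (rsum (seq 0 (S K)) (fun v => if Rle_dec (INR (p ^ v)) z then
      w (p ^ v)%nat * (P * (Q + (M - (c - t (p ^ v)%nat)) * (M - (c - t (p ^ v)%nat)))) else 0)).
  { apply rsum_le; intros v; destruct Rle_dec; [|apply Rle_refl].
    rewrite rsum_pp_products_shift by auto.
    apply Rmult_le_compat_l; [apply Hw, pow_ge1; auto|apply IH]. }
  replace (rsum (seq 0 (S K)) _) with (P * ((Q + (M - c) * (M - c)) * Zp + 2 * (M - c) * T + R0)).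
  - replace (Zp * P * _) with (P * (Zp * (R0 + Q + (T / Zp + M - c) * (T / Zp + M - c)))) by ring.
    apply Rmult_le_compat_l; [lra|now apply variance_add_prime].
  - unfold Zp, T, R0, local_factor.
    rewrite <- !rsum_scal, <- !rsum_plus, <- rsum_scal.
    apply rsum_ext; intros v; destruct Rle_dec; ring.
Qed.

End Variance.

Lemma INR_ge1 n : (1 <= n)%nat -> 1 <= INR n.
Proof. intros; now apply (le_INR 1). Qed.

Lemma bnd_gt x : 1 <= x -> x < INR (bnd x) /\ (2 <= bnd x)%nat.
Proof.
  intros Hx; unfold bnd; destruct (archimed x) as [H1 H2].
  assert (1 < up x)%Z by (apply lt_IZR; lra).
  rewrite INR_IZR_INZ, Z2Nat.id by lia; split; [lra|lia].
Qed.

Lemma le_bnd x n : 1 <= x -> INR n <= x -> (n < bnd x)%nat.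
Proof. intros Hx Hn; destruct (bnd_gt x Hx) as [H _]; apply INR_lt; lra. Qed.

Lemma seq1_split K : (1 <= K)%nat -> seq 1 K = 1%nat :: seq 2 (K - 1).
Proof. intros; destruct K; [lia|]; simpl; do 2 f_equal; lia. Qed.

Lemma pp_sum_from_ext nu0 x f g : (forall n, f n = g n) -> pp_sum_from nu0 x f = pp_sum_from nu0 x g.
Proof.
  intros H; unfold pp_sum_from; apply rsum_ext; intros p; apply rsum_ext; intros nu.
  repeat destruct (_ : sumbool _ _); auto.
Qed.

Lemma pp_sum_from_plus nu0 x f g :
  pp_sum_from nu0 x (fun n => f n + g n) = pp_sum_from nu0 x f + pp_sum_from nu0 x g.
Proof.
  unfold pp_sum_from; rewrite <- rsum_plus; apply rsum_ext; intros p.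
  rewrite <- rsum_plus; apply rsum_ext; intros nu; repeat destruct (_ : sumbool _ _); ring.
Qed.

Lemma pp_sum_from_nonneg nu0 x g : (forall n, (1 <= n)%nat -> 0 <= g n) -> 0 <= pp_sum_from nu0 x g.
Proof.
  intros H; apply rsum_nonneg; intros p Hp; apply in_seq in Hp; apply rsum_nonneg; intros nu _.
  repeat destruct (_ : sumbool _ _); try lra; apply H, pow_ge1; lia.
Qed.

(* The exponent ranges of [pp_sum_from] and of [local_factor] differ only at [nu = 0],
   which contributes [g 1]. *)
Lemma pp_sum_from_1_local_factor x g : g 1%nat = 0 ->
  pp_sum_from 1 x g =
  rsum (seq 1 (bnd x)) (fun p => if prime_dec (Z.of_nat p) then local_factor x (bnd x) g p else 0).
Proof.
  intros Hg; unfold pp_sum_from; apply rsum_ext; intros p; destruct prime_dec; [|apply rsum_0].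
  rewrite local_factor_split, Hg.
  destruct Rle_dec; rewrite Rplus_0_l; apply rsum_ext_in; intros nu Hnu;
    apply in_seq in Hnu; destruct le_dec; [auto|lia|auto|lia].
Qed.

Lemma sum_upto_plus x f g : sum_upto x (fun n => f n + g n) = sum_upto x f + sum_upto x g.
Proof. unfold sum_upto; rewrite <- rsum_plus; apply rsum_ext; intros n; destruct Rle_dec; ring. Qed.

Lemma sum_upto_ext x f g : (forall n, f n = g n) -> sum_upto x f = sum_upto x g.
Proof. intros H; apply rsum_ext; intros n; destruct Rle_dec; auto. Qed.

(* Every [n <= x] is a product of prime powers [<= x] of primes [< bnd x]. *)
Lemma sum_upto_le_pp_products x F : 1 <= x -> (forall n, (1 <= n)%nat -> 0 <= F n) ->
  sum_upto x F <= rsum (pp_products x (bnd x) (seq 1 (bnd x))) F.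
Proof.
  intros Hx HF; pose proof (bnd_gt x Hx) as [_ HK].
  apply Rle_trans with
    (rsum (pp_products x (bnd x) (seq 1 (bnd x))) (fun n => if Rle_dec (INR n) x then F n else 0)).
  - apply rsum_le_incl; [apply seq_NoDup| | |].
    + intros a Ha; apply in_seq in Ha; destruct Rle_dec; [apply HF; lia|lra].
    + intros a Ha; destruct (pp_products_spec _ _ _ _ Ha); destruct Rle_dec; [apply HF; lia|lra].
    + intros a Ha Hpos; apply in_seq in Ha; destruct Rle_dec as [Hax|]; [|lra].
      apply pp_products_complete; [lia|auto|lia|].
      intros q Hq Hd; apply in_seq; pose proof (is_prime_ge2 _ Hq).
      pose proof (Nat.divide_pos_le q a ltac:(lia) Hd); lia.
  - apply rsum_le_in; intros a Ha; destruct (pp_products_spec _ _ _ _ Ha).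
    destruct Rle_dec; [lra|apply HF; lia].
Qed.

Lemma rsum_pp_products_le_sum_upto x y F : 1 <= x -> (forall n, (1 <= n)%nat -> 0 <= F n) ->
  rsum (pp_products y (bnd x) (seq 1 (bnd x))) (fun N => if Rle_dec (INR N) x then F N else 0)
  <= sum_upto x F.
Proof.
  intros Hx HF; apply rsum_le_incl.
  - apply pp_products_NoDup, seq_NoDup.
  - intros a Ha; destruct (pp_products_spec _ _ _ _ Ha); destruct Rle_dec; [apply HF; auto|lra].
  - intros a Ha; apply in_seq in Ha; destruct Rle_dec; [apply HF; lia|lra].
  - intros a Ha Hpos; destruct (pp_products_spec _ _ _ _ Ha); destruct Rle_dec as [Hax|]; [|lra].
    apply in_seq; pose proof (le_bnd x a Hx Hax); lia.
Qed.

Definition weight (lam : nat -> R) (n : nat) : R := lam n / INR n.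

Lemma weight_mult lam : multiplicative_R lam -> multiplicative_R (weight lam).
Proof.
  intros [H1 Hm]; split; unfold weight.
  - rewrite H1; simpl; field.
  - intros m n Hm1 Hn1 G; rewrite Hm, mult_INR by auto.
    pose proof (lt_0_INR m Hm1); pose proof (lt_0_INR n Hn1); field; lra.
Qed.

Lemma weight_nonneg lam : (forall n, 0 <= lam n) -> forall n, (1 <= n)%nat -> 0 <= weight lam n.
Proof. intros H n Hn; apply Rmult_le_pos; [auto|left; apply Rinv_0_lt_compat, lt_0_INR; auto]. Qed.

Lemma sum_upto_weight_ge1 x lam : 1 <= x -> multiplicative_R lam -> (forall n, 0 <= lam n) ->
  1 <= sum_upto x (weight lam).
Proof.
  intros Hx Hm Hl; pose proof (bnd_gt x Hx) as [_ HK]; unfold sum_upto.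
  rewrite (seq1_split (bnd x)), rsum_cons by lia.
  destruct (weight_mult _ Hm) as [H1 _]; change (INR 1) with 1.
  destruct Rle_dec; [|lra]; rewrite H1.
  enough (0 <= rsum (seq 2 (bnd x - 1)) (fun n => if Rle_dec (INR n) x then weight lam n else 0)) by lra.
  apply rsum_nonneg; intros a Ha; apply in_seq in Ha.
  destruct Rle_dec; [apply weight_nonneg; auto; lia|lra].
Qed.

Lemma ln_le a b : 0 < a -> a <= b -> ln a <= ln b.
Proof. intros Ha Hab; destruct (Rle_lt_or_eq_dec _ _ Hab) as [H|<-]; [left; now apply ln_increasing|lra]. Qed.

Lemma exp_le a b : a <= b -> exp a <= exp b.
Proof. intros Hab; destruct (Rle_lt_or_eq_dec _ _ Hab) as [H|<-]; [left; now apply exp_increasing|lra]. Qed.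

Lemma ln_nonneg a : 1 <= a -> 0 <= ln a.
Proof. intros; rewrite <- ln_1; apply ln_le; lra. Qed.

Lemma ln_ge1 n : (3 <= n)%nat -> 1 <= ln (INR n).
Proof.
  intros; rewrite <- (ln_exp 1); apply ln_le; [apply exp_pos|]; pose proof exp_le_3.
  enough (3 <= INR n) by lra; replace 3 with (INR 3) by (simpl; ring); now apply le_INR.
Qed.

Definition prime_term (lam : nat -> R) (z : R) (p : nat) : R :=
  if Rle_dec (INR p) z then weight lam p else 0.

Definition higher_terms (lam : nat -> R) (z : R) (K p : nat) : R :=
  rsum (seq 2 (K - 1)) (fun v => if Rle_dec (INR (p ^ v)) z then weight lam (p ^ v)%nat else 0).

Lemma local_factor_weight lam z K p : multiplicative_R lam -> 1 <= z -> (1 <= K)%nat ->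
  local_factor z K (weight lam) p = 1 + prime_term lam z p + higher_terms lam z K p.
Proof.
  intros Hm Hz HK; rewrite local_factor_split, (seq1_split K HK), rsum_cons.
  destruct (weight_mult _ Hm) as [H1 _]; destruct Rle_dec; [|lra].
  rewrite H1; unfold prime_term, higher_terms; rewrite Nat.pow_1_r; ring.
Qed.

Lemma prime_term_bound x A B lam z p : 0 < A -> z <= x -> (forall n, 0 <= lam n) ->
  in_M x A B lam -> is_prime p -> 0 <= prime_term lam z p <= A / INR p.
Proof.
  intros HA0 Hzx Hl [HA _] Hp; pose proof (lt_0_INR p ltac:(apply is_prime_ge2 in Hp; lia)).
  assert (Hinv : 0 < / INR p) by now apply Rinv_0_lt_compat.
  unfold prime_term, weight, Rdiv; destruct Rle_dec as [Hpz|].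
  - specialize (HA p Hp ltac:(lra)); rewrite Rabs_right in HA by (apply Rle_ge; auto).
    split; [apply Rmult_le_pos|apply Rmult_le_compat_r]; auto; lra.
  - split; [lra|apply Rmult_le_pos; lra].
Qed.

Lemma higher_terms_nonneg lam z K p : (forall n, 0 <= lam n) -> (1 <= p)%nat ->
  0 <= higher_terms lam z K p.
Proof.
  intros Hl Hp; apply rsum_nonneg; intros v _.
  destruct Rle_dec; [apply weight_nonneg, pow_ge1; auto|lra].
Qed.

Lemma in_M_higher_terms_ln x A B lam z : 1 <= x -> z <= x -> (forall n, 0 <= lam n) ->
  in_M x A B lam ->
  rsum (seq 1 (bnd x)) (fun p => if prime_dec (Z.of_nat p) then
     rsum (seq 2 (bnd x - 1)) (fun v => if Rle_dec (INR (p ^ v)) z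
                                        then weight lam (p ^ v)%nat * ln (INR (p ^ v)) else 0)
     else 0) <= B.
Proof.
  intros Hx Hzx Hl [_ HB]; eapply Rle_trans; [|exact HB]; apply rsum_le; intros p.
  pose proof (bnd_gt x Hx) as [_ HK].
  destruct prime_dec as [Hp|]; [|rewrite rsum_0; lra].
  rewrite (seq1_split (bnd x)), rsum_cons by lia; destruct (le_dec 2 1); [lia|].
  rewrite Rplus_0_l; apply rsum_le_in; intros v Hv; apply in_seq in Hv; destruct le_dec; [|lia].
  pose proof (pow_ge4 p v ltac:(apply is_prime_ge2 in Hp; lia) ltac:(lia)).
  assert (0 <= ln (INR (p ^ v))) by (apply ln_nonneg, INR_ge1; lia).
  assert (0 < INR (p ^ v)) by (apply lt_0_INR; lia).
  unfold weight; destruct (Rle_dec (INR (p ^ v)) z); destruct (Rle_dec (INR (p ^ v)) x); try lra.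
  - rewrite Rabs_right by (apply Rle_ge; auto); right; field; lra.
  - apply Rmult_le_pos; [apply Rmult_le_pos; auto; apply Rabs_pos|left; apply Rinv_0_lt_compat; auto].
Qed.

(* Prime powers [p^v] with [v >= 2] are [>= 4], so [ln (p^v) >= 1]. *)
Lemma in_M_higher_terms x A B lam z : 1 <= x -> z <= x -> (forall n, 0 <= lam n) ->
  in_M x A B lam ->
  rsum (seq 1 (bnd x)) (fun p => if prime_dec (Z.of_nat p) then higher_terms lam z (bnd x) p else 0)
  <= B.
Proof.
  intros; eapply Rle_trans; [|eapply in_M_higher_terms_ln; eauto].
  apply rsum_le_in; intros p Hp; apply in_seq in Hp.
  destruct prime_dec as [Hpr|]; [|lra]; apply rsum_le_in; intros v Hv; apply in_seq in Hv.
  pose proof (pow_ge4 p v ltac:(apply is_prime_ge2 in Hpr; lia) ltac:(lia)).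
  destruct Rle_dec; [|lra]; assert (1 <= ln (INR (p ^ v))) by (apply ln_ge1; lia).
  assert (0 <= weight lam (p ^ v)%nat) by (apply weight_nonneg; auto; lia); nra.
Qed.

Lemma rsum_inv_sqr_le m K : (1 <= m)%nat ->
  rsum (seq (S m) K) (fun n => / (INR n * INR n)) <= / INR m.
Proof.
  revert m; induction K as [|K IH]; intros m Hm; simpl; rewrite ?rsum_nil, ?rsum_cons.
  - left; apply Rinv_0_lt_compat, lt_0_INR; auto.
  - specialize (IH (S m) ltac:(lia)); pose proof (INR_ge1 m Hm); rewrite S_INR in *.
    enough (/ ((INR m + 1) * (INR m + 1)) + / (INR m + 1) <= / INR m) by lra.
    apply Rmult_le_reg_l with (INR m * ((INR m + 1) * (INR m + 1))); [nra|].
    field_simplify; [nra|lra|lra].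
Qed.

Lemma rsum_inv_sqr_primes_le K : (1 <= K)%nat ->
  rsum (seq 1 K) (fun p => if le_dec 2 p then / (INR p * INR p) else 0) <= 1.
Proof.
  intros HK; rewrite (seq1_split K), rsum_cons by lia; destruct le_dec; [lia|].
  rewrite (rsum_ext_in _ _ (fun n => / (INR n * INR n))).
  - pose proof (rsum_inv_sqr_le 1 (K - 1) (le_n _)) as H; simpl in H; rewrite Rinv_1 in H; lra.
  - intros q Hq; apply in_seq in Hq; destruct le_dec; [auto|lia].
Qed.

(* With [H_p = 1 + a_p + b_p], [a_p <= A/p] and [sum_p b_p <= B]. *)
Lemma rsum_local_factor_sub1_sqr x A B lam : 0 < A -> 1 <= x -> multiplicative_R lam ->
  (forall n, 0 <= lam n) -> in_M x A B lam ->
  rsum (seq 1 (bnd x)) (fun p => if prime_dec (Z.of_nat p) then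
     (local_factor x (bnd x) (weight lam) p - 1) * (local_factor x (bnd x) (weight lam) p - 1) else 0)
  <= 2 * (A * A) + 2 * (B * B).
Proof.
  intros HA Hx Hm Hl HM; pose proof (bnd_gt x Hx) as [_ HK]; set (K := bnd x) in *.
  set (b := fun p => if prime_dec (Z.of_nat p) then higher_terms lam x K p else 0).
  assert (Hb0 : forall p, In p (seq 1 K) -> 0 <= b p).
  { intros p Hp; apply in_seq in Hp; unfold b; destruct prime_dec; [apply higher_terms_nonneg; auto; lia|lra]. }
  apply Rle_trans with (rsum (seq 1 K) (fun p =>
    2 * (A * A) * (if le_dec 2 p then / (INR p * INR p) else 0) + 2 * (b p * b p))).
  - apply rsum_le_in; intros p Hp; apply in_seq in Hp; unfold b.
    destruct prime_dec as [Hpr|]; destruct le_dec as [H2|H2].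
    + rewrite local_factor_weight by (auto; lia).
      pose proof (prime_term_bound x A B lam x p HA (Rle_refl _) Hl HM Hpr) as [Ha1 Ha2].
      assert (0 < INR p) by (apply lt_0_INR; lia).
      assert (prime_term lam x p * prime_term lam x p <= A * A * / (INR p * INR p)).
      { replace (A * A * / (INR p * INR p)) with ((A / INR p) * (A / INR p)) by (field; lra).
        apply Rmult_le_compat; auto. }
      set (a := prime_term lam x p) in *; set (c := higher_terms lam x K p).
      assert (0 <= (a - c) * (a - c)) by apply Rle_0_sqr; nra.
    + apply is_prime_ge2 in Hpr; lia.
    + assert (0 < INR p) by (apply lt_0_INR; lia).
      assert (0 <= / (INR p * INR p)) by (left; apply Rinv_0_lt_compat; nra); nra.
    + lra.
  - rewrite rsum_plus, !rsum_scal.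
    pose proof (rsum_inv_sqr_primes_le K ltac:(lia)).
    pose proof (rsum_sqr_le _ _ Hb0).
    assert (Hbs : rsum (seq 1 K) b <= B) by (apply (in_M_higher_terms x A B lam x); auto; lra).
    assert (0 <= rsum (seq 1 K) b) by (apply rsum_nonneg; auto).
    assert (rsum (seq 1 K) b * rsum (seq 1 K) b <= B * B) by (apply Rmult_le_compat; auto).
    nra.
Qed.

Lemma local_factor_cauchy_schwarz z K w t p : (1 <= p)%nat -> (forall n, (1 <= n)%nat -> 0 <= w n) ->
  local_factor z K (fun n => w n * t n) p * local_factor z K (fun n => w n * t n) p
  <= local_factor z K w p * local_factor z K (fun n => w n * (t n * t n)) p.
Proof.
  intros Hp Hw; set (r := fun v => if Rle_dec (INR (p ^ v)) z then w (p ^ v)%nat else 0).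
  assert (Hr : forall i, 0 <= r i) by (intros i; unfold r; destruct Rle_dec; [apply Hw, pow_ge1; auto|lra]).
  pose proof (rsum_cauchy_schwarz (seq 0 (S K)) r (fun _ => 1) (fun v => t (p ^ v)%nat) Hr) as H.
  unfold local_factor; cbv beta in H.
  replace (rsum _ (fun v => if Rle_dec _ z then w (p ^ v)%nat * t (p ^ v)%nat else 0))
    with (rsum (seq 0 (S K)) (fun i => r i * 1 * t (p ^ i)%nat))
    by (apply rsum_ext; intros; unfold r; destruct Rle_dec; ring).
  replace (rsum _ (fun v => if Rle_dec _ z then w (p ^ v)%nat else 0))
    with (rsum (seq 0 (S K)) (fun i => r i * 1 * 1))
    by (apply rsum_ext; intros; unfold r; destruct Rle_dec; ring).
  replace (rsum _ (fun v => if Rle_dec _ z then w (p ^ v)%nat * (t (p ^ v)%nat * t (p ^ v)%nat) else 0))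
    with (rsum (seq 0 (S K)) (fun i => r i * t (p ^ i)%nat * t (p ^ i)%nat))
    by (apply rsum_ext; intros; unfold r; destruct Rle_dec; ring).
  exact H.
Qed.

Section RealVariance.

Variables (A B x : R) (lam t : nat -> R).
Hypotheses (HA : 0 < A) (Hx : 1 <= x) (Hm : multiplicative_R lam) (Hl : forall n, 0 <= lam n)
  (HM : in_M x A B lam) (Ht : additive_R t).

Let K := bnd x.
Let L := seq 1 K.
Let w := weight lam.
Let theta := pp_sum_from 1 x (fun q => lam q * t q / INR q).
Let sigma := pp_sum_from 1 x (fun q => lam q * (t q * t q) / INR q).

Lemma local_square_sum_eq : local_square_sum x K w t L = sigma.
Proof.
  unfold sigma; rewrite (pp_sum_from_ext 1 x _ (fun q => w q * (t q * t q)))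
    by (intros; unfold w, weight, Rdiv; ring).
  rewrite pp_sum_from_1_local_factor; [reflexivity|].
  rewrite (additive_R_1 _ Ht); ring.
Qed.

(* [theta] is the sum of the unnormalised local means, and [H_p >= 1]: the shift is a
   sum of products [(1 - H_p) * (local mean at p)], to which Cauchy-Schwarz applies. *)
Lemma local_mean_sum_sub_theta :
  (local_mean_sum x K w t L - theta) * (local_mean_sum x K w t L - theta)
  <= (2 * (A * A) + 2 * (B * B)) * sigma.
Proof.
  pose proof (weight_mult _ Hm) as Hwm; pose proof (weight_nonneg _ Hl) as Hwp; fold w in Hwm, Hwp.
  assert (HZ : forall p, is_prime p -> 1 <= local_factor x K w p)
    by (intros p Hp; apply local_factor_ge1; auto; apply is_prime_ge2 in Hp; lia).
  set (f := fun p => if prime_dec (Z.of_nat p) then 1 - local_factor x K w p else 0).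
  set (g := fun p => if prime_dec (Z.of_nat p)
                     then local_factor x K (fun n => w n * t n) p / local_factor x K w p else 0).
  assert (Hshift : local_mean_sum x K w t L - theta = rsum L (fun i => 1 * f i * g i)).
  { unfold theta; rewrite (pp_sum_from_ext 1 x _ (fun q => w q * t q))
      by (intros; unfold w, weight, Rdiv; ring).
    rewrite pp_sum_from_1_local_factor by (rewrite (additive_R_1 _ Ht); ring).
    change (bnd x) with K; unfold local_mean_sum; rewrite <- rsum_minus; apply rsum_ext; intros p.
    unfold f, g; destruct prime_dec as [Hp|]; [|ring]; specialize (HZ p Hp); field; lra. }
  assert (Hf : rsum L (fun i => 1 * f i * f i) <= 2 * (A * A) + 2 * (B * B)).
  { eapply Rle_trans; [|apply (rsum_local_factor_sub1_sqr x A B lam); auto].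
    right; apply rsum_ext; intros p; unfold f, K, w; destruct prime_dec; ring. }
  assert (Hg : rsum L (fun i => 1 * g i * g i) <= sigma).
  { rewrite <- local_square_sum_eq; apply rsum_le_in; intros p Hp; apply in_seq in Hp.
    unfold g; destruct prime_dec as [Hpr|]; [|lra]; specialize (HZ p Hpr).
    pose proof (local_factor_cauchy_schwarz x K w t p ltac:(lia) Hwp) as Hcs.
    set (T := local_factor x K (fun n => w n * t n) p) in *; set (Z0 := local_factor x K w p) in *.
    set (R0 := local_factor x K (fun n => w n * (t n * t n)) p) in *.
    assert (0 <= R0) by (apply local_factor_nonneg; [lia|];
                         intros n Hn; apply Rmult_le_pos; [auto|apply Rle_0_sqr]).
    replace (1 * (T / Z0) * (T / Z0)) with ((T * T) / (Z0 * Z0)) by (field; lra).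
    apply Rmult_le_reg_r with (Z0 * Z0); [nra|].
    unfold Rdiv; rewrite Rmult_assoc, Rinv_l by nra; nra. }
  assert (0 <= rsum L (fun i => 1 * g i * g i)) by (apply rsum_nonneg; intros; nra).
  assert (0 <= rsum L (fun i => 1 * f i * f i)) by (apply rsum_nonneg; intros; nra).
  rewrite Hshift; eapply Rle_trans; [apply rsum_cauchy_schwarz; intros; lra|].
  apply Rmult_le_compat; auto.
Qed.

Lemma real_variance_bound :
  sum_upto x (fun n => w n * ((t n - theta) * (t n - theta)))
  <= euler_prod x K w L * ((1 + (2 * (A * A) + 2 * (B * B))) * sigma).
Proof.
  pose proof (weight_mult _ Hm) as Hwm; pose proof (weight_nonneg _ Hl) as Hwp; fold w in Hwm, Hwp.
  eapply Rle_trans.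
  { apply sum_upto_le_pp_products; auto; intros n Hn; apply Rmult_le_pos; [auto|apply Rle_0_sqr]. }
  eapply Rle_trans; [apply (pp_products_variance x K w t Hx Hwm Hwp Ht L theta), seq_NoDup|].
  rewrite local_square_sum_eq.
  assert (1 <= euler_prod x K w L) by (apply euler_prod_ge1; auto).
  pose proof local_mean_sum_sub_theta.
  apply Rmult_le_compat_l; lra.
Qed.

End RealVariance.

(** * Chebyshev's bound *)

Lemma div_succ n p : (1 <= p)%nat ->
  ((S n) / p = n / p + (if Nat.eqb ((S n) mod p) 0 then 1 else 0))%nat.
Proof.
  intros Hp; pose proof (Nat.div_mod_eq n p) as E; pose proof (Nat.mod_upper_bound n p ltac:(lia)).
  set (q := (n / p)%nat) in *; set (r := (n mod p)%nat) in *.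
  destruct (Nat.eq_dec (S r) p) as [Hrp|Hrp].
  - assert (E' : (S n = (q + 1) * p)%nat) by lia.
    rewrite E', Nat.div_mul, Nat.Div0.mod_mul by lia; simpl; lia.
  - assert (S n = p * q + S r)%nat by lia.
    rewrite <- (Nat.div_unique (S n) p q (S r)), <- (Nat.mod_unique (S n) p q (S r)) by lia.
    destruct (Nat.eqb_spec (S r) 0); lia.
Qed.

Lemma rsum_ln_prime_divisors_le L m : NoDup L -> (1 <= m)%nat ->
  rsum L (fun p => if prime_dec (Z.of_nat p) then if Nat.eqb (m mod p) 0 then ln (INR p) else 0 else 0)
  <= ln (INR m).
Proof.
  revert m; induction L as [|p L IH]; intros m Hnd Hm.
  { rewrite rsum_nil; apply ln_nonneg, INR_ge1; auto. }
  inversion Hnd as [|? ? Hpn Hnd']; subst; rewrite rsum_cons.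
  destruct (prime_dec (Z.of_nat p)) as [Hp|Hp]; [|rewrite Rplus_0_l; apply IH; auto].
  pose proof (is_prime_ge2 _ Hp).
  destruct (Nat.eqb_spec (m mod p) 0) as [Em|]; [|rewrite Rplus_0_l; apply IH; auto].
  apply Nat.Lcm0.mod_divide in Em as [m' ->]; assert (1 <= m')%nat by (destruct m'; lia).
  rewrite (rsum_ext_in L _ (fun q => if prime_dec (Z.of_nat q)
                                     then if Nat.eqb (m' mod q) 0 then ln (INR q) else 0 else 0)).
  - rewrite mult_INR, ln_mult by (apply lt_0_INR; lia); specialize (IH m' Hnd' ltac:(auto)); lra.
  - intros q Hq; destruct (prime_dec (Z.of_nat q)) as [Hq'|]; [|auto].
    replace (Nat.eqb (m' * p mod q) 0) with (Nat.eqb (m' mod q) 0); [reflexivity|].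
    destruct (Nat.eqb_spec (m' mod q) 0) as [E|E]; destruct (Nat.eqb_spec (m' * p mod q) 0) as [E'|E'];
      auto; exfalso; rewrite Nat.Lcm0.mod_divide in E, E'.
    + apply E', Nat.divide_mul_l; auto.
    + apply E; destruct (prime_divide_mul _ _ _ Hq' E') as [D|D]; auto.
      rewrite (prime_divide_prime q p Hq' Hp D) in Hq; contradiction.
Qed.

Definition legendre_sum (K n : nat) : R :=
  rsum (seq 1 K) (fun p => if prime_dec (Z.of_nat p) then INR (n / p) * ln (INR p) else 0).

Definition ln_fact (n : nat) : R := rsum (seq 1 n) (fun m => ln (INR m)).

(* Only the multiplicity-one part of Legendre's formula for [ln n!]. *)
Lemma legendre_sum_le K n : legendre_sum K n <= ln_fact n.
Proof.
  induction n as [|n IH].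
  { unfold legendre_sum, ln_fact; simpl seq; rewrite rsum_nil.
    apply Rle_trans with (rsum (seq 1 K) (fun _ => 0)); [|rewrite rsum_0; lra].
    apply rsum_le; intros p; destruct prime_dec; [|lra]; rewrite Nat.Div0.div_0_l; simpl; lra. }
  replace (legendre_sum K (S n)) with (legendre_sum K n + rsum (seq 1 K) (fun p =>
      if prime_dec (Z.of_nat p) then if Nat.eqb ((S n) mod p) 0 then ln (INR p) else 0 else 0)).
  - unfold ln_fact; rewrite seq_S, rsum_app, rsum_cons, rsum_nil; simpl (1 + n)%nat.
    pose proof (rsum_ln_prime_divisors_le (seq 1 K) (S n) (seq_NoDup _ _) ltac:(lia)).
    unfold ln_fact in IH; lra.
  - unfold legendre_sum; rewrite <- rsum_plus; apply rsum_ext_in; intros p Hp; apply in_seq in Hp.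
    destruct prime_dec; [|lra]; rewrite div_succ, plus_INR by lia.
    destruct Nat.eqb; simpl; ring.
Qed.

Lemma ln_fact_le n : ln_fact n <= INR n * ln (INR n).
Proof.
  induction n as [|n IH]; unfold ln_fact in *; [simpl; rewrite rsum_nil; lra|].
  rewrite seq_S, rsum_app, rsum_cons, rsum_nil; replace (1 + n)%nat with (S n) by lia.
  destruct n as [|n]; [simpl; rewrite rsum_nil, ln_1; lra|].
  assert (ln (INR (S n)) <= ln (INR (S (S n)))) by (apply ln_le; [apply lt_0_INR|apply le_INR]; lia).
  assert (0 <= ln (INR (S n))) by (apply ln_nonneg, INR_ge1; lia).
  assert (0 < INR (S n)) by (apply lt_0_INR; lia).
  rewrite (S_INR (S n)) in *; nra.
Qed.

Lemma rsum_count_le a K n : (1 <= a)%nat ->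
  rsum (seq a K) (fun p => if Rle_dec (INR p) (INR n) then 1 else 0) <= INR (n + 1 - a).
Proof.
  revert a; induction K as [|K IH]; intros a Ha; simpl; rewrite ?rsum_nil, ?rsum_cons; [apply pos_INR|].
  specialize (IH (S a) ltac:(lia)); destruct Rle_dec as [H|H].
  - apply INR_le in H; replace (n + 1 - a)%nat with (S (n + 1 - S a)) by lia; rewrite S_INR; lra.
  - assert (INR (n + 1 - S a) <= INR (n + 1 - a)) by (apply le_INR; lia); lra.
Qed.

Definition mertens_sum (K : nat) (z : R) : R :=
  rsum (seq 1 K) (fun p => if prime_dec (Z.of_nat p)
                           then if Rle_dec (INR p) z then ln (INR p) / INR p else 0 else 0).

(* [n * ln p / p <= (floor (n/p) + 1) ln p], then Legendre and [ln n! <= n ln n]. *)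
Lemma mertens_sum_nat_le K n : (1 <= n)%nat -> mertens_sum K (INR n) <= 2 * ln (INR n).
Proof.
  intros Hn; pose proof (lt_0_INR n Hn); assert (0 <= ln (INR n)) by (apply ln_nonneg, INR_ge1; auto).
  assert (H1 : INR n * mertens_sum K (INR n) <= legendre_sum K n +
            rsum (seq 1 K) (fun p => ln (INR n) * (if Rle_dec (INR p) (INR n) then 1 else 0))).
  { unfold mertens_sum, legendre_sum; rewrite <- rsum_scal, <- rsum_plus.
    apply rsum_le_in; intros p Hp; apply in_seq in Hp.
    destruct prime_dec as [Hpr|]; destruct Rle_dec as [Hle|]; try lra.
    - pose proof (is_prime_ge2 _ Hpr); pose proof (lt_0_INR p ltac:(lia)); pose proof (INR_le _ _ Hle).
      assert (ln (INR p) <= ln (INR n)) by (apply ln_le; auto).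
      assert (0 <= ln (INR p)) by (apply ln_nonneg, INR_ge1; lia).
      pose proof (Nat.div_mod_eq n p); pose proof (Nat.mod_upper_bound n p ltac:(lia)).
      assert (INR n <= INR p * (INR (n / p) + 1)) by (rewrite <- S_INR, <- mult_INR; apply le_INR; nia).
      assert (INR n * (ln (INR p) / INR p) <= (INR (n / p) + 1) * ln (INR p)).
      { replace (INR n * (ln (INR p) / INR p)) with ((INR n / INR p) * ln (INR p)) by (field; lra).
        apply Rmult_le_compat_r; auto; apply Rmult_le_reg_r with (INR p); auto.
        unfold Rdiv; rewrite Rmult_assoc, Rinv_l by lra; lra. }
      nra.
    - assert (0 <= INR (n / p) * ln (INR p)) by (apply Rmult_le_pos; [apply pos_INR|apply ln_nonneg, INR_ge1; lia]).
      lra. }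
  rewrite rsum_scal in H1; pose proof (rsum_count_le 1 K n (le_n _)); replace (n + 1 - 1)%nat with n in * by lia.
  pose proof (legendre_sum_le K n); pose proof (ln_fact_le n).
  apply Rmult_le_reg_l with (INR n); auto; nra.
Qed.

Lemma mertens_sum_le K z : 1 <= z -> mertens_sum K z <= 2 * ln z.
Proof.
  intros Hz; destruct (archimed z) as [Hup1 Hup2].
  assert (1 < up z)%Z by (apply lt_IZR; lra).
  set (n := Z.to_nat (up z - 1)).
  assert (Hn : INR n = IZR (up z) - 1) by (unfold n; rewrite INR_IZR_INZ, Z2Nat.id, minus_IZR by lia; reflexivity).
  assert (Hfloor : forall p, INR p <= z <-> INR p <= INR n).
  { intros p; rewrite Hn, INR_IZR_INZ; split; intros Hp; [|lra].
    assert (Hp' : (Z.of_nat p <= up z - 1)%Z) by (assert (Z.of_nat p < up z)%Z by (apply lt_IZR; lra); lia).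
    apply IZR_le in Hp'; rewrite minus_IZR in Hp'; lra. }
  replace (mertens_sum K z) with (mertens_sum K (INR n)).
  - eapply Rle_trans; [apply mertens_sum_nat_le; unfold n; lia|].
    enough (ln (INR n) <= ln z) by lra; apply ln_le; [apply (lt_0_INR n); unfold n; lia|lra].
  - apply rsum_ext; intros p; destruct prime_dec; [|auto].
    destruct (Rle_dec (INR p) (INR n)), (Rle_dec (INR p) z); auto; exfalso; firstorder.
Qed.

(** * Comparing the Euler product with the partial sum *)

Lemma rprod_nonneg f L : (forall p, In p L -> 0 <= f p) -> 0 <= rprod f L.
Proof.
  induction L as [|q L IH]; intros H; [unfold rprod; simpl; lra|].
  change (0 <= f q * rprod f L); apply Rmult_le_pos; [apply H; now left|apply IH; intros; apply H; now right].
Qed.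

Lemma rprod_le_exp (L : list nat) (a b c : nat -> R) :
  (forall p, In p L -> 0 <= a p <= b p * exp (c p)) -> (forall p, In p L -> 0 <= b p) ->
  rprod a L <= rprod b L * exp (rsum L c).
Proof.
  induction L as [|p L IH]; intros H1 H2; [unfold rprod; simpl; rewrite rsum_nil, exp_0; lra|].
  change (a p * rprod a L <= b p * rprod b L * exp (c p + rsum L c)); rewrite exp_plus.
  destruct (H1 p (or_introl eq_refl)) as [Ha1 Ha2].
  assert (rprod a L <= rprod b L * exp (rsum L c)) by (apply IH; intros; [apply H1|apply H2]; now right).
  assert (0 <= rprod a L) by (apply rprod_nonneg; intros q Hq; apply (H1 q); now right).
  replace (b p * rprod b L * (exp (c p) * exp (rsum L c)))
    with ((b p * exp (c p)) * (rprod b L * exp (rsum L c))) by ring.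
  apply Rmult_le_compat; auto.
Qed.

Lemma exp_le_1_3x u : 0 <= u <= 1 -> exp u <= 1 + 3 * u.
Proof.
  intros [H0 H1]; pose proof (exp_ineq1_le (- u)).
  assert (exp u * exp (- u) = 1) by (rewrite <- exp_plus, Rplus_opp_r; apply exp_0).
  assert (exp u <= 3) by (pose proof exp_le_3; assert (exp u <= exp 1) by (apply exp_le; lra); lra).
  pose proof (exp_pos u); nra.
Qed.

Definition inv_between (y x : R) (p : nat) : R :=
  if Rle_dec (INR p) x then if Rle_dec (INR p) y then 0 else / INR p else 0.

Lemma rsum_inv_between_le K y x : 1 < y ->
  rsum (seq 1 K) (fun p => if prime_dec (Z.of_nat p) then inv_between y x p else 0)
  <= mertens_sum K x / ln y.
Proof.
  intros Hy; assert (Hly : 0 < ln y) by (rewrite <- ln_1; apply ln_increasing; lra).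
  unfold mertens_sum, Rdiv; rewrite Rmult_comm, <- rsum_scal; apply rsum_le_in; intros p Hp.
  apply in_seq in Hp; destruct prime_dec as [Hpr|]; [|lra]; unfold inv_between.
  pose proof (lt_0_INR p ltac:(apply is_prime_ge2 in Hpr; lia)).
  assert (0 <= ln (INR p)) by (apply ln_nonneg, INR_ge1; apply is_prime_ge2 in Hpr; lia).
  assert (0 < / INR p) by now apply Rinv_0_lt_compat.
  assert (0 < / ln y) by now apply Rinv_0_lt_compat.
  destruct Rle_dec; [|lra]; destruct Rle_dec.
  { apply Rmult_le_pos; [lra|apply Rmult_le_pos; lra]. }
  assert (ln y <= ln (INR p)) by (apply ln_le; lra).
  replace (/ ln y * (ln (INR p) * / INR p)) with ((ln (INR p) / ln y) * / INR p) by (field; lra).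
  enough (1 <= ln (INR p) / ln y) by nra.
  apply Rmult_le_reg_r with (ln y); auto; unfold Rdiv; rewrite Rmult_assoc, Rinv_l by lra; lra.
Qed.

(* For [p >= 2], [2 ln p >= 2 ln 2 > 1]. *)
Lemma rsum_inv_between_1_le K x :
  rsum (seq 1 K) (fun p => if prime_dec (Z.of_nat p) then inv_between 1 x p else 0)
  <= 2 * mertens_sum K x.
Proof.
  unfold mertens_sum; rewrite <- rsum_scal; apply rsum_le_in; intros p Hp; apply in_seq in Hp.
  destruct prime_dec as [Hpr|]; [|lra]; unfold inv_between; pose proof (is_prime_ge2 _ Hpr).
  assert (0 < INR p) by (apply lt_0_INR; lia).
  assert (2 <= INR p) by (replace 2 with (INR 2) by (simpl; ring); now apply le_INR).
  destruct Rle_dec; [|lra]; destruct Rle_dec; [lra|].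
  assert (ln 2 <= ln (INR p)) by (apply ln_le; lra); pose proof ln_lt_2.
  replace (2 * (ln (INR p) / INR p)) with ((2 * ln (INR p)) * / INR p) by (field; lra).
  enough (1 * / INR p <= 2 * ln (INR p) * / INR p) by lra.
  apply Rmult_le_compat_r; [left; apply Rinv_0_lt_compat|]; lra.
Qed.

Section EulerProduct.

Variables (A B x : R) (lam : nat -> R).
Hypotheses (HA : 0 < A) (HB : 0 < B) (Hx : 1 <= x) (Hm : multiplicative_R lam)
  (Hl : forall n, 0 <= lam n) (HM : in_M x A B lam).

Let K := bnd x.
Let L := seq 1 K.
Let w := weight lam.

Lemma K_ge2 : (2 <= K)%nat.
Proof. apply bnd_gt; auto. Qed.

Lemma local_factor_weight_ge1 z p : 1 <= z -> is_prime p -> 1 <= local_factor z K w p.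
Proof.
  intros; apply local_factor_ge1; auto; [apply weight_mult|apply weight_nonneg|apply is_prime_ge2 in H0; lia]; auto.
Qed.

Lemma euler_prod_weight_ge1 z : 1 <= z -> 1 <= euler_prod z K w L.
Proof. intros; apply euler_prod_ge1; [|apply weight_mult|apply weight_nonneg]; auto. Qed.

Lemma euler_prod_at_1 : euler_prod 1 K w L = 1.
Proof.
  pose proof K_ge2; unfold euler_prod; generalize L; intros l; induction l as [|a l IH]; [reflexivity|].
  change ((if prime_dec (Z.of_nat a) then local_factor 1 K w a else 1) *
          rprod (fun p => if prime_dec (Z.of_nat p) then local_factor 1 K w p else 1) l = 1).
  rewrite IH; destruct prime_dec as [Hp|]; [|ring]; pose proof (is_prime_ge2 _ Hp).
  unfold w; rewrite local_factor_weight by (auto; lia || lra); unfold prime_term, higher_terms.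
  assert (1 < INR a) by (apply (lt_INR 1); lia).
  destruct Rle_dec; [lra|]; rewrite (rsum_ext_in _ _ (fun _ => 0)), rsum_0; [ring|].
  intros v Hv; apply in_seq in Hv; destruct Rle_dec as [Hle|]; [exfalso|auto].
  assert (4 <= a ^ v)%nat by (apply pow_ge4; lia).
  assert (4 <= INR (a ^ v)) by (replace 4 with (INR 4) by (simpl; ring); now apply le_INR); lra.
Qed.

(* Raising the cutoff from [y] to [x] only adds [1/p]-sized prime terms and part of the
   prime-power mass [B]. *)
Lemma euler_prod_ratio y : 1 <= y -> y <= x ->
  euler_prod x K w L <= euler_prod y K w L *
    exp (A * rsum L (fun p => if prime_dec (Z.of_nat p) then inv_between y x p else 0) + B).
Proof.
  intros Hy Hyx; pose proof K_ge2.
  set (d := fun p => if prime_dec (Z.of_nat p) then local_factor x K w p - local_factor y K w p else 0).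
  apply Rle_trans with (euler_prod y K w L * exp (rsum L d)).
  - apply rprod_le_exp.
    + intros p _; unfold d; destruct prime_dec as [Hpr|]; [|rewrite exp_0; lra].
      pose proof (local_factor_weight_ge1 y p Hy Hpr).
      assert (local_factor y K w p <= local_factor x K w p).
      { apply rsum_le; intros v; destruct (Rle_dec _ y), (Rle_dec _ x); try lra.
        apply weight_nonneg, pow_ge1; auto; apply is_prime_ge2 in Hpr; lia. }
      pose proof (exp_ineq1_le (local_factor x K w p - local_factor y K w p)); split; nra.
    + intros p _; destruct prime_dec as [Hpr|]; [|lra].
      pose proof (local_factor_weight_ge1 y p Hy Hpr); lra.
  - apply Rmult_le_compat_l; [pose proof (euler_prod_weight_ge1 y Hy); lra|apply exp_le].
    apply Rle_trans with (rsum L (fun p => A * (if prime_dec (Z.of_nat p) then inv_between y x p else 0)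
                                   + (if prime_dec (Z.of_nat p) then higher_terms lam x K p else 0))).
    + apply rsum_le_in; intros p Hp; apply in_seq in Hp; unfold d.
      destruct prime_dec as [Hpr|]; [|lra]; pose proof (is_prime_ge2 _ Hpr).
      unfold w; rewrite !local_factor_weight by (auto; lia).
      assert (0 <= higher_terms lam y K p) by (apply higher_terms_nonneg; auto; lia).
      enough (prime_term lam x p - prime_term lam y p <= A * inv_between y x p) by lra.
      pose proof (prime_term_bound x A B lam x p HA (Rle_refl _) Hl HM Hpr) as [_ Hb].
      assert (0 <= weight lam p) by (apply weight_nonneg; auto; lia).
      unfold prime_term, inv_between in *.
      destruct (Rle_dec (INR p) x), (Rle_dec (INR p) y); lra.
    + rewrite rsum_plus, rsum_scal.
      enough (rsum L (fun p => if prime_dec (Z.of_nat p) then higher_terms lam x K p else 0) <= B) by lra.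
      apply (in_M_higher_terms x A B lam x); auto; lra.
Qed.

Lemma rsum_local_factor_weight_ln_le y : 1 <= y -> y <= x ->
  rsum L (fun p => if prime_dec (Z.of_nat p) then local_factor y K (fun n => w n * ln (INR n)) p else 0)
  <= A * mertens_sum K y + B.
Proof.
  intros Hy Hyx; pose proof K_ge2; unfold w, mertens_sum.
  apply Rle_trans with (rsum L (fun p =>
    A * (if prime_dec (Z.of_nat p) then if Rle_dec (INR p) y then ln (INR p) / INR p else 0 else 0)
    + (if prime_dec (Z.of_nat p) then rsum (seq 2 (K - 1)) (fun v => if Rle_dec (INR (p ^ v)) y
           then weight lam (p ^ v)%nat * ln (INR (p ^ v)) else 0) else 0))).
  - apply rsum_le_in; intros p Hp; apply in_seq in Hp; destruct prime_dec as [Hpr|]; [|lra].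
    pose proof (is_prime_ge2 _ Hpr); rewrite local_factor_split, (seq1_split K), rsum_cons by lia.
    change (INR 1) with 1; rewrite ln_1, Nat.pow_1_r.
    pose proof (prime_term_bound x A B lam y p HA Hyx Hl HM Hpr) as [Ha1 Ha2]; unfold prime_term in *.
    assert (0 <= ln (INR p)) by (apply ln_nonneg, INR_ge1; lia).
    assert (0 < INR p) by (apply lt_0_INR; lia).
    destruct (Rle_dec 1 y); [|lra]; destruct (Rle_dec (INR p) y); [|lra].
    assert (weight lam p * ln (INR p) <= A / INR p * ln (INR p)) by (apply Rmult_le_compat_r; auto).
    replace (A * (ln (INR p) / INR p)) with (A / INR p * ln (INR p)) by (field; lra).
    rewrite Rmult_0_r, Rplus_0_l; now apply Rplus_le_compat_r.
  - rewrite rsum_plus, rsum_scal; pose proof (in_M_higher_terms_ln x A B lam y Hx Hyx Hl HM).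
    unfold L, K in *; lra.
Qed.

Section Rankin.

Variable y : R.
Hypotheses (Hy : 1 <= y) (Hly : 1 <= ln y) (Hyx : y <= x)
  (Hratio : 6 * A + 3 * B + 1 <= ln x / ln y).

(* Rankin's trick with exponent [s = 1/ln y]: every prime power [q <= y] has [q^s <= e]. *)
Let s := / ln y.
Let tilt := fun n : nat => w n * exp (s * ln (INR n)).

Lemma tilt_mult : multiplicative_R tilt.
Proof.
  destruct (weight_mult _ Hm) as [H1 H2]; split; unfold tilt; fold w in H1, H2.
  - rewrite H1; simpl; rewrite ln_1, Rmult_0_r, exp_0; ring.
  - intros m n Hm1 Hn1 G; rewrite H2, mult_INR, ln_mult by (auto; apply lt_0_INR; auto).
    rewrite Rmult_plus_distr_l, exp_plus; ring.
Qed.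

Lemma tilt_nonneg n : (1 <= n)%nat -> 0 <= tilt n.
Proof. intros; apply Rmult_le_pos; [apply weight_nonneg; auto|left; apply exp_pos]. Qed.

Let lnmass := fun p => local_factor y K (fun n => w n * ln (INR n)) p.

Lemma s_pos : 0 < s.
Proof. apply Rinv_0_lt_compat; lra. Qed.

Lemma lnmass_nonneg p : (1 <= p)%nat -> 0 <= lnmass p.
Proof.
  intros Hp; apply local_factor_nonneg; auto; intros n Hn.
  apply Rmult_le_pos; [apply weight_nonneg; auto|apply ln_nonneg, INR_ge1; auto].
Qed.

(* [exp u <= 1 + 3u] on [0 <= u = s ln q <= 1], then [1 + u <= exp u]. *)
Lemma local_factor_tilt_le p : is_prime p ->
  local_factor y K tilt p <= local_factor y K w p * exp (3 * s * lnmass p).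
Proof.
  intros Hpr; pose proof (is_prime_ge2 _ Hpr); pose proof s_pos.
  pose proof (local_factor_weight_ge1 y p Hy Hpr); pose proof (lnmass_nonneg p ltac:(lia)).
  assert (Hsy : s * ln y = 1) by (unfold s; field; lra).
  apply Rle_trans with (local_factor y K w p + 3 * s * lnmass p).
  - unfold lnmass, local_factor; rewrite <- rsum_scal, <- rsum_plus; apply rsum_le; intros v.
    destruct Rle_dec as [Hq|]; [|lra]; unfold tilt.
    assert (Hq1 : (1 <= p ^ v)%nat) by (apply pow_ge1; lia).
    assert (0 <= ln (INR (p ^ v))) by (apply ln_nonneg, INR_ge1; auto).
    assert (ln (INR (p ^ v)) <= ln y) by (apply ln_le; [apply lt_0_INR|]; auto).
    assert (Hu : 0 <= s * ln (INR (p ^ v)) <= 1) by (split; [apply Rmult_le_pos|]; nra).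
    pose proof (exp_le_1_3x _ Hu); pose proof (weight_nonneg lam Hl _ Hq1) as Hw0; fold w in Hw0; nra.
  - assert (0 <= 3 * s * lnmass p) by (apply Rmult_le_pos; lra).
    pose proof (exp_ineq1_le (3 * s * lnmass p)); nra.
Qed.

Lemma tilt_exponent_le :
  rsum L (fun p => if prime_dec (Z.of_nat p) then 3 * s * lnmass p else 0) <= 6 * A + 3 * B.
Proof.
  pose proof s_pos; assert (Hsy : s * ln y = 1) by (unfold s; field; lra).
  rewrite (rsum_ext _ _ (fun p => 3 * s * (if prime_dec (Z.of_nat p) then lnmass p else 0)))
    by (intros; destruct prime_dec; ring).
  rewrite rsum_scal; pose proof (rsum_local_factor_weight_ln_le y Hy Hyx) as HD.
  change (rsum L (fun p => if prime_dec (Z.of_nat p) then lnmass p else 0)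
          <= A * mertens_sum K y + B) in HD.
  pose proof (mertens_sum_le K y Hy).
  assert (A * mertens_sum K y <= A * (2 * ln y)) by (apply Rmult_le_compat_l; lra).
  assert (3 * s * rsum L (fun p => if prime_dec (Z.of_nat p) then lnmass p else 0)
          <= 3 * s * (2 * A * ln y + B)) by (apply Rmult_le_compat_l; lra).
  assert (s <= 1) by (unfold s; rewrite <- Rinv_1; apply Rinv_le_contravar; lra).
  assert (3 * s * (2 * A * ln y + B) = 6 * A * (s * ln y) + 3 * (s * B)) as E by ring.
  rewrite Hsy in E.
  assert (s * B <= B) by (rewrite <- (Rmult_1_l B) at 2; apply Rmult_le_compat_r; lra).
  lra.
Qed.

Lemma euler_prod_tilt_le :
  euler_prod y K tilt L <= euler_prod y K w L * exp (6 * A + 3 * B).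
Proof.
  eapply Rle_trans; [apply (rprod_le_exp L _
      (fun p => if prime_dec (Z.of_nat p) then local_factor y K w p else 1)
      (fun p => if prime_dec (Z.of_nat p) then 3 * s * lnmass p else 0))|].
  - intros p _; destruct prime_dec as [Hpr|]; [|rewrite exp_0; lra].
    split; [apply local_factor_nonneg, tilt_nonneg; apply is_prime_ge2 in Hpr; lia|].
    now apply local_factor_tilt_le.
  - intros p _; destruct prime_dec as [Hpr|]; [|lra].
    pose proof (local_factor_weight_ge1 y p Hy Hpr); lra.
  - apply Rmult_le_compat_l; [pose proof (euler_prod_weight_ge1 y Hy); lra|].
    apply exp_le, tilt_exponent_le.
Qed.

(* Terms with [N > x] get weight [(N/x)^s >= 1] in [tilt]. *)
Lemma pp_products_tail_le :
  rsum (pp_products y K L) (fun N => if Rle_dec (INR N) x then 0 else w N)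
  <= exp (- (s * ln x)) * euler_prod y K tilt L.
Proof.
  assert (Hs0 : 0 < s) by (apply Rinv_0_lt_compat; lra).
  rewrite <- rsum_pp_products_mult by (apply seq_NoDup || apply tilt_mult).
  rewrite <- rsum_scal; apply rsum_le_in; intros N HN; destruct (pp_products_spec _ _ _ _ HN) as [HN1 _].
  destruct Rle_dec as [|Hnx]; [apply Rmult_le_pos; [left; apply exp_pos|apply tilt_nonneg; auto]|].
  unfold tilt; assert (ln x < ln (INR N)) by (apply ln_increasing; lra).
  assert (1 <= exp (- (s * ln x)) * exp (s * ln (INR N))) by (rewrite <- exp_plus, <- exp_0; apply exp_le; nra).
  pose proof (weight_nonneg lam Hl N HN1) as Hw0; fold w in Hw0; nra.
Qed.

Lemma euler_prod_rankin : euler_prod y K w L <= 2 * sum_upto x w.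
Proof.
  assert (Hs0 : 0 < s) by (apply Rinv_0_lt_compat; lra).
  assert (Hsx : 6 * A + 3 * B + 1 <= s * ln x)
    by (replace (s * ln x) with (ln x / ln y) by (unfold s; field; lra); exact Hratio).
  set (good := rsum (pp_products y K L) (fun N => if Rle_dec (INR N) x then w N else 0)).
  set (tail := rsum (pp_products y K L) (fun N => if Rle_dec (INR N) x then 0 else w N)).
  assert (Hsplit : euler_prod y K w L = good + tail).
  { unfold good, tail; rewrite <- rsum_pp_products_mult, <- rsum_plus
      by (apply seq_NoDup || apply weight_mult; auto).
    apply rsum_ext; intros N; destruct Rle_dec; ring. }
  assert (Hgood : good <= sum_upto x w) by (apply rsum_pp_products_le_sum_upto; auto; apply weight_nonneg; auto).
  assert (Htail : tail <= euler_prod y K w L / 2).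
  { eapply Rle_trans; [apply pp_products_tail_le|].
    eapply Rle_trans; [apply Rmult_le_compat_l; [left; apply exp_pos|apply euler_prod_tilt_le]|].
    replace (exp (- (s * ln x)) * (euler_prod y K w L * exp (6 * A + 3 * B)))
      with (euler_prod y K w L * exp (6 * A + 3 * B + - (s * ln x))) by (rewrite exp_plus; ring).
    assert (exp (6 * A + 3 * B + - (s * ln x)) <= exp (-1)) by (apply exp_le; lra).
    assert (exp (-1) <= / 2).
    { assert (exp 1 * exp (-1) = 1) by (rewrite <- exp_plus, Rplus_opp_r; apply exp_0).
      pose proof (exp_ineq1_le 1); pose proof (exp_pos (-1)); nra. }
    pose proof (euler_prod_weight_ge1 y Hy); unfold Rdiv; nra. }
  lra.
Qed.

End Rankin.

Lemma euler_prod_le_sum_upto :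
  euler_prod x K w L <= 2 * exp (4 * A * (6 * A + 3 * B + 1) + B) * sum_upto x w.
Proof.
  set (T := 6 * A + 3 * B + 1); assert (HT : 1 <= T) by (unfold T; lra).
  pose proof (sum_upto_weight_ge1 x lam Hx Hm Hl) as Hsum; fold w in Hsum.
  assert (0 <= ln x) by (apply ln_nonneg; auto); pose proof (mertens_sum_le K x Hx).
  destruct (Rle_lt_dec T (ln x)) as [Hbig|Hsmall].
  - set (y := exp (ln x / T)).
    assert (Hly : ln y = ln x / T) by apply ln_exp.
    assert (Hly1 : 1 <= ln y).
    { rewrite Hly; apply Rmult_le_reg_r with T; [lra|]; unfold Rdiv; rewrite Rmult_assoc, Rinv_l; lra. }
    assert (Hy : 1 < y) by (rewrite <- exp_0; apply exp_increasing; rewrite <- Hly; lra).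
    assert (Hyx : y <= x).
    { rewrite <- (exp_ln x) by lra; apply exp_le; apply Rmult_le_reg_r with T; [lra|].
      unfold Rdiv; rewrite Rmult_assoc, Rinv_l by lra; nra. }
    assert (Hrat : ln x / ln y = T) by (rewrite Hly; field; lra).
    pose proof (euler_prod_rankin y ltac:(lra) Hly1 Hyx ltac:(rewrite Hrat; unfold T; lra)).
    pose proof (rsum_inv_between_le K y x Hy).
    assert (mertens_sum K x / ln y <= 2 * T).
    { apply Rmult_le_reg_r with (ln y); [lra|]; unfold Rdiv; rewrite Rmult_assoc, Rinv_l by lra.
      rewrite Hly; replace (2 * T * (ln x / T)) with (2 * ln x) by (field; lra); lra. }
    assert (rsum L (fun p => if prime_dec (Z.of_nat p) then inv_between y x p else 0) <= 4 * T)
      by (unfold L; lra).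
    assert (exp (A * rsum L (fun p => if prime_dec (Z.of_nat p) then inv_between y x p else 0) + B)
            <= exp (4 * A * T + B)) by (apply exp_le; nra).
    pose proof (euler_prod_weight_ge1 y ltac:(lra)).
    eapply Rle_trans; [apply (euler_prod_ratio y); lra|].
    replace (2 * exp (4 * A * T + B) * sum_upto x w) with (2 * sum_upto x w * exp (4 * A * T + B)) by ring.
    apply Rmult_le_compat; auto; [lra|left; apply exp_pos].
  - pose proof (euler_prod_ratio 1 (Rle_refl _) Hx) as Hratio1; rewrite euler_prod_at_1 in Hratio1.
    pose proof (rsum_inv_between_1_le K x).
    assert (rsum L (fun p => if prime_dec (Z.of_nat p) then inv_between 1 x p else 0) <= 4 * T)
      by (unfold L; lra).
    assert (exp (A * rsum L (fun p => if prime_dec (Z.of_nat p) then inv_between 1 x p else 0) + B)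
            <= exp (4 * A * T + B)) by (apply exp_le; nra).
    pose proof (exp_pos (4 * A * T + B)); nra.
Qed.

End EulerProduct.

Lemma additive_C_components th : additive_C th ->
  additive_R (fun n => fst (th n)) /\ additive_R (fun n => snd (th n)).
Proof. intros Hth; split; intros m n Hm Hn G; now rewrite Hth. Qed.

Lemma sum_upto_Cnorm2_sub x lam th (c : Cpx) :
  sum_upto x (fun n => lam n / INR n * Cnorm2 (Csub (th n) c)) =
  sum_upto x (fun n => weight lam n * ((fst (th n) - fst c) * (fst (th n) - fst c))) +
  sum_upto x (fun n => weight lam n * ((snd (th n) - snd c) * (snd (th n) - snd c))).
Proof.
  rewrite <- sum_upto_plus; apply sum_upto_ext; intros n.
  unfold Cnorm2, Csub, weight; simpl; ring.
Qed.

Lemma frakS_split lam th x : frakS lam th x =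
  pp_sum_from 1 x (fun q => lam q * (fst (th q) * fst (th q)) / INR q) +
  pp_sum_from 1 x (fun q => lam q * (snd (th q) * snd (th q)) / INR q).
Proof.
  unfold frakS; rewrite <- pp_sum_from_plus; apply pp_sum_from_ext.
  intros n; unfold Cnorm2, Rdiv; ring.
Qed.

Lemma pp_sum_from_sqr_nonneg x lam t : (forall n, 0 <= lam n) ->
  0 <= pp_sum_from 1 x (fun q => lam q * (t q * t q) / INR q).
Proof.
  intros Hl; apply pp_sum_from_nonneg; intros n Hn.
  apply Rmult_le_pos; [apply Rmult_le_pos; [auto|apply Rle_0_sqr]|].
  left; apply Rinv_0_lt_compat, lt_0_INR; auto.
Qed.

Theorem lemma5p1 :
  forall A B : R, 0 < A -> 0 < B ->
  exists K : R, 0 < K /\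
  forall (x : R) (lam : nat -> R) (th : nat -> Cpx),
    1 <= x ->
    multiplicative_R lam ->
    (forall n, 0 <= lam n) ->
    in_M x A B lam ->
    additive_C th ->
    sum_upto x (fun n => lam n / INR n * Cnorm2 (Csub (th n) (Theta lam th x)))
    <= K * frakS lam th x * sum_upto x (fun n => lam n / INR n).
Proof.
  intros A B HA HB.
  set (C1 := 1 + (2 * (A * A) + 2 * (B * B))).
  set (C2 := 2 * exp (4 * A * (6 * A + 3 * B + 1) + B)).
  exists (C1 * C2); split; [unfold C1, C2; pose proof (exp_pos (4 * A * (6 * A + 3 * B + 1) + B)); nra|].
  intros x lam th Hx Hm Hl HM Hth.
  destruct (additive_C_components th Hth) as [Hfst Hsnd].
  pose proof (real_variance_bound A B x lam _ HA Hx Hm Hl HM Hfst) as Hre.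
  pose proof (real_variance_bound A B x lam _ HA Hx Hm Hl HM Hsnd) as Him.
  pose proof (euler_prod_le_sum_upto A B x lam HA HB Hx Hm Hl HM) as HP; cbv beta in Hre, Him.
  pose proof (pp_sum_from_sqr_nonneg x lam (fun n => fst (th n)) Hl).
  pose proof (pp_sum_from_sqr_nonneg x lam (fun n => snd (th n)) Hl).
  rewrite sum_upto_Cnorm2_sub, frakS_split; change (fun n => lam n / INR n) with (weight lam).
  change (1 + (2 * (A * A) + 2 * (B * B))) with C1 in Hre, Him; change (2 * exp (4 * A * (6 * A + 3 * B + 1) + B)) with C2 in HP.
  eapply Rle_trans; [apply Rplus_le_compat; [exact Hre|exact Him]|].
  set (P := euler_prod _ _ _ _) in *; set (S := sum_upto x (weight lam)) in *.
  set (s1 := pp_sum_from 1 x (fun q => lam q * (fst (th q) * fst (th q)) / INR q)) in *.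
  set (s2 := pp_sum_from 1 x (fun q => lam q * (snd (th q) * snd (th q)) / INR q)) in *.
  replace (P * (C1 * s1) + P * (C1 * s2)) with (P * (C1 * (s1 + s2))) by ring.
  replace (C1 * C2 * (s1 + s2) * S) with (C2 * S * (C1 * (s1 + s2))) by ring.
  apply Rmult_le_compat_r; [unfold C1; nra|exact HP].
Qed.
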